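(* Consider the control-affine system $\dot x = f(x) + g(x)u$ with $f:\mathbb{R}^n\to\mathbb{R}^n$, $g:\mathbb{R}^n\to\mathbb{R}^{n\times m}$ locally Lipschitz, a continuously differentiable function $h:\mathbb{R}^n\to\mathbb{R}$ with safe set $\mathcal{C}=\{x:h(x)\ge0\}$ and boundary $\partial\mathcal{C}=\{x:h(x)=0\}$, and a controller $k:\mathbb{R}^n\to\mathbb{R}^m$ satisfying $L_fh(x)+L_gh(x)k(x)\ge-\alpha(h(x))$ for all $x\in\mathcal{C}$, with $\alpha$ a class-$\mathcal{K}_\infty^e$ function. Let $d>0$, $\delta>0$, $c>\frac{d}{\alpha(\delta)}$ and $\alpha'(r)=(1+c)\alpha(r)$. Assume: (i) there is $\mu>0$ with $\|L_gh(x)\|\ge\mu$ for all $x\in\partial\mathcal{C}$; (ii) $L_gh$ is Lipschitz on $\mathcal{C}$: there is $M>0$ with $\|L_gh(x)-L_gh(y)\|\le M\|x-y\|$ for all $x,y\in\mathcal{C}$; (iii) there is a class-$\mathcal{K}$ function $\beta$ with $h(x)\ge\beta\big(\inf_{y\in\partial\mathcal{C}}\|x-y\|\big)$. Define the adjusted controller $k_a(x) = k(x) + \frac{1}{\varepsilon}L_gh(x)^\top$ with $0<\varepsilon\le\frac{\mu^2}{4d}$. Then $$\dot h(x,k_a(x)) := L_fh(x)+L_gh(x)k_a(x) \ge -\alpha'(h(x)) + d$$ for all $x\in\mathcal{C}$ for which there exists $y\in\partial\mathcal{C}$ with $\|x-y\|\le\frac{\mu}{2M}$.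
   Context: $L_fh(x) = \frac{\partial h}{\partial x}(x)f(x)$, $L_gh(x) = \frac{\partial h}{\partial x}(x)g(x)$ (a row vector). A function $\alpha:[-b,a)\to\mathbb{R}$ is of class-$\mathcal{K}_\infty^e$ if it is continuous, strictly increasing, $\alpha(0)=0$, $\lim_{s\to\infty}\alpha(s)=\infty$, and $\alpha(y)\le0$ for $y\in[-b,0]$. A class-$\mathcal{K}$ function is a continuous strictly increasing function $\beta:[0,a)\to\mathbb{R}_{\ge0}$ with $\beta(0)=0$. *)

From HB Require Import structures.
From mathcomp Require Import all_boot all_order all_algebra.
From mathcomp Require Import all_classical all_reals all_analysis.
Set Implicit Arguments. Unset Strict Implicit. Unset Printing Implicit Defensive.
Import Order.TTheory GRing.Theory Num.Theory.
Import numFieldNormedType.Exports.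
Local Open Scope classical_set_scope.
Local Open Scope ring_scope.

(* Euclidean (Frobenius) norm of a matrix; for row/column vectors this is
   the usual Euclidean norm ||.||. *)
Definition enorm (R : realType) (p q : nat) (A : 'M[R]_(p, q)) : R :=
  Num.sqrt (\sum_(i < p) \sum_(j < q) A i j ^+ 2).

Definition locally_lipschitz (R : realType) (n p q : nat)
  (F : 'cV[R]_n -> 'M[R]_(p, q)) : Prop :=
  forall x : 'cV[R]_n, exists r : R, exists L : R, 0 < r /\ 0 <= L /\
    forall y z : 'cV[R]_n, enorm (y - x) < r -> enorm (z - x) < r ->
      enorm (F y - F z) <= L * enorm (y - z).

Definition C1_with_gradient (R : realType) (n : nat)
  (h : 'cV[R]_n -> R) (Dh : 'cV[R]_n -> 'rV[R]_n) : Prop :=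
  (forall x, differentiable h x /\ ('d h x : 'cV[R]_n -> R) = (fun v => (Dh x *m v) 0 0))
  /\ continuous Dh.

Definition Lie_f (R : realType) (n : nat) (Dh : 'cV[R]_n -> 'rV[R]_n)
  (f : 'cV[R]_n -> 'cV[R]_n) (x : 'cV[R]_n) : R := (Dh x *m f x) 0 0.
Definition Lie_g (R : realType) (n m : nat) (Dh : 'cV[R]_n -> 'rV[R]_n)
  (g : 'cV[R]_n -> 'M[R]_(n, m)) (x : 'cV[R]_n) : 'rV[R]_m := Dh x *m g x.

Definition class_Kinf_e (R : realType) (alpha : R -> R) : Prop :=
  exists b : R, 0 <= b /\
    {within `[-b, +oo[, continuous alpha} /\
    {in `[-b, +oo[ &, forall s t, s < t -> alpha s < alpha t} /\
    alpha 0 = 0 /\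
    alpha @ +oo --> +oo /\
    {in `[-b, 0], forall y, alpha y <= 0}.

Definition class_K (R : realType) (a : \bar R) (beta : R -> R) : Prop :=
  (0 < a)%E /\
  {within [set s | 0 <= s /\ (s%:E < a)%E], continuous beta} /\
  {in [set s | 0 <= s /\ (s%:E < a)%E] &, forall s t, s < t -> beta s < beta t} /\
  beta 0 = 0 /\
  (forall s, 0 <= s -> (s%:E < a)%E -> 0 <= beta s).

Definition dist_boundary (R : realType) (n : nat) (h : 'cV[R]_n -> R)
  (x : 'cV[R]_n) : R :=
  inf [set enorm (x - y) | y in [set y | h y = 0]].

From HB Require Import structures.
From mathcomp Require Import all_boot all_order all_algebra.
From mathcomp Require Import all_classical all_reals all_analysis.
From mathcomp Require Import ring lra.
Import Order.TTheory GRing.Theory Num.Theory.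
Import numFieldNormedType.Exports.
Local Open Scope classical_set_scope.
Local Open Scope ring_scope.

(* Near the boundary point y, the Lipschitz bound (ii) keeps L_gh(x) within
   mu/2 of L_gh(y), whose norm is at least mu by (i); hence ||L_gh(x)||^2 is at
   least mu^2/4, and the added term eps^-1 ||L_gh(x)||^2 contributed by k_a is
   at least d.  Since alpha(h x) >= 0 on C and c > d / alpha(delta) > 0, the
   extra c * alpha(h x) in alpha' only weakens the bound.  The bound is
   pointwise. *)

Section EuclideanNorm.
Context {R : realType}.

Lemma enorm_ge0 {p q : nat} (A : 'M[R]_(p, q)) : 0 <= enorm A.
Proof. exact: sqrtr_ge0. Qed.

Lemma sqr_enorm {p q : nat} (A : 'M[R]_(p, q)) :
  enorm A ^+ 2 = \sum_(i < p) \sum_(j < q) A i j ^+ 2.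
Proof.
by rewrite sqr_sqrtr //; apply: sumr_ge0 => i _; apply: sumr_ge0 => j _;
  exact: sqr_ge0.
Qed.

(* Entrywise (a + b)^2 <= 2 a^2 + 2 b^2: a squared substitute for the
   triangle inequality, which is not proved for [enorm]. *)
Lemma sqr_enorm_le_sub {p q : nat} (A B : 'M[R]_(p, q)) :
  enorm B ^+ 2 <= 2 * enorm A ^+ 2 + 2 * enorm (A - B) ^+ 2.
Proof.
rewrite !sqr_enorm !mulr_sumr -big_split /=; apply: ler_sum => i _.
rewrite !mulr_sumr -big_split /=; apply: ler_sum => j _.
rewrite !mxE -subr_ge0.
have -> : 2 * A i j ^+ 2 + 2 * (A i j - B i j) ^+ 2 - B i j ^+ 2
        = (2 * A i j - B i j) ^+ 2 by ring.
exact: sqr_ge0.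
Qed.

Lemma sqr_enorm_ge_near {p q : nat} {A B : 'M[R]_(p, q)} {mu : R} :
  0 <= mu -> mu <= enorm B -> enorm (A - B) <= mu / 2 ->
  mu ^+ 2 / 4 <= enorm A ^+ 2.
Proof.
move=> mu0 muB AB.
have muB2 : mu ^+ 2 <= enorm B ^+ 2 by rewrite ler_pXn2r ?nnegrE ?enorm_ge0.
have AB2 : enorm (A - B) ^+ 2 <= (mu / 2) ^+ 2.
  by rewrite ler_pXn2r ?nnegrE ?enorm_ge0 ?divr_ge0.
have := sqr_enorm_le_sub A B; rewrite expr_div_n in AB2; lra.
Qed.

Lemma mulmx_trmx_self_enorm {q : nat} (u : 'rV[R]_q) :
  (u *m u^T) 0 0 = enorm u ^+ 2.
Proof.
rewrite sqr_enorm big_ord1 mxE; apply: eq_bigr => j _.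
by rewrite mxE expr2.
Qed.

Lemma mulmx_add_scaled_trmx {q : nat} (u : 'rV[R]_q) (w : 'cV[R]_q) (a : R) :
  (u *m (w + a *: u^T)) 0 0 = (u *m w) 0 0 + a * enorm u ^+ 2.
Proof.
by rewrite mulmxDr -scalemxAr mxE [in X in _ + X]mxE mulmx_trmx_self_enorm.
Qed.

End EuclideanNorm.

Section ClassKinfE.
Context {R : realType} {alpha : R -> R}.
Hypothesis alpha_Kinf_e : class_Kinf_e alpha.

Lemma class_Kinf_e_gt0 {r : R} : 0 < r -> 0 < alpha r.
Proof.
case: alpha_Kinf_e => b [b0 [_ [mono [alpha0 _]]]] r0.
rewrite -alpha0; apply: mono => //; rewrite in_itv /= andbT.
- by rewrite oppr_le0.
- by rewrite (le_trans _ (ltW r0)) // oppr_le0.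
Qed.

Lemma class_Kinf_e_ge0 {r : R} : 0 <= r -> 0 <= alpha r.
Proof.
case: alpha_Kinf_e => _ [_ [_ [_ [alpha0 _]]]].
rewrite le_eqVlt => /predU1P [<- | /class_Kinf_e_gt0 /ltW //].
by rewrite alpha0.
Qed.

End ClassKinfE.

Theorem lemma3 (R : realType) (n m : nat)
  (f : 'cV[R]_n -> 'cV[R]_n) (g : 'cV[R]_n -> 'M[R]_(n, m))
  (h : 'cV[R]_n -> R) (Dh : 'cV[R]_n -> 'rV[R]_n)
  (k : 'cV[R]_n -> 'cV[R]_m) (alpha : R -> R)
  (d delta c mu M eps : R) :
  locally_lipschitz f -> locally_lipschitz g ->
  C1_with_gradient h Dh ->
  class_Kinf_e alpha ->
  (forall x, 0 <= h x ->
     Lie_f Dh f x + (Lie_g Dh g x *m k x) 0 0 >= - alpha (h x)) ->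
  0 < d -> 0 < delta -> c > d / alpha delta ->
  (* (i) *)
  0 < mu -> (forall x, h x = 0 -> enorm (Lie_g Dh g x) >= mu) ->
  (* (ii) *)
  0 < M -> (forall x y, 0 <= h x -> 0 <= h y ->
     enorm (Lie_g Dh g x - Lie_g Dh g y) <= M * enorm (x - y)) ->
  (* (iii) *)
  (exists (a : \bar R) (beta : R -> R), class_K a beta /\
     forall x, 0 <= h x -> ((dist_boundary h x)%:E < a)%E /\
                           beta (dist_boundary h x) <= h x) ->
  0 < eps -> eps <= mu ^+ 2 / (4 * d) ->
  let alpha' := fun r => (1 + c) * alpha r in
  let ka := fun x => k x + eps^-1 *: (Lie_g Dh g x)^T in
  forall x, 0 <= h x ->
    (exists y, h y = 0 /\ enorm (x - y) <= mu / (2 * M)) ->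
    Lie_f Dh f x + (Lie_g Dh g x *m ka x) 0 0 >= - alpha' (h x) + d.
Proof.
move=> _ _ _ alphaK cbf d0 delta0 c_gt mu0 mu_bd M0 lip _ eps0 eps_le
  alpha' ka x hx [y [hy xy]].
have near_y : enorm (Lie_g Dh g x - Lie_g Dh g y) <= mu / 2.
  apply: le_trans (lip x y hx _) _; first by rewrite hy.
  apply: le_trans (ler_wpM2l (ltW M0) xy) _.
  suff -> : M * (mu / (2 * M)) = mu / 2 by [].
  by field; exact: lt0r_neq0.
have u2 := sqr_enorm_ge_near (ltW mu0) (mu_bd y hy) near_y.
have damping : d <= eps^-1 * enorm (Lie_g Dh g x) ^+ 2.
  rewrite -(ler_pM2l eps0) mulrA mulfV ?mul1r ?gt_eqF //.
  move: eps_le; rewrite ler_pdivlMr ?mulr_gt0 //; nra.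
have c0 : 0 < c by apply: lt_trans c_gt; rewrite divr_gt0 ?class_Kinf_e_gt0.
have := mulr_ge0 (ltW c0) (class_Kinf_e_ge0 alphaK hx).
have := cbf x hx; rewrite /ka mulmx_add_scaled_trmx /alpha' mulrDl mul1r.
lra.
Qed.
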